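(* Let $(A,\diamond,\circ,\lambda)$ be a left semi-truss such that $(A,\circ)$ is a group and $(A,\diamond)$ is a left cancellative semigroup with an idempotent $e$. Define $\sigma:A\to A$ by $\sigma(a)=a\circ e$. Then $\sigma$ is bijective, and with the binary operation $a\bullet b:=\sigma\big(\sigma^{-1}(a)\circ\sigma^{-1}(b)\big)$, the triple $(A,\diamond,\bullet)$ is a left semi-brace.
   Context: A left semi-truss $(A,\diamond,\circ,\lambda)$ is a set $A$ with two associative binary operations $\diamond,\circ$ and a function $\lambda:A\times A\to A$ such that $a\circ(b\diamond c)=(a\circ b)\diamond\lambda(a,c)$ for all $a,b,c\in A$. A semigroup $(A,\diamond)$ is left cancellative if $a\diamond b=a\diamond c$ implies $b=c$. A (left) semi-brace is a set $A$ with binary operations $\diamond,\bullet$ such that $(A,\diamond)$ is a left cancellative semigroup, $(A,\bullet)$ is a group, and $a\bullet(b\diamond c)=(a\bullet b)\diamond\big(a\bullet(a^\bullet\diamond c)\big)$ for all $a,b,c\in A$, where $a^\bullet$ is the inverse of $a$ in $(A,\bullet)$. *)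

From mathcomp Require Import all_boot.
Set Implicit Arguments. Unset Strict Implicit. Unset Printing Implicit Defensive.

Definition is_left_semi_truss (A : Type) (dia circ : A -> A -> A)
    (lam : A -> A -> A) : Prop :=
  associative dia /\ associative circ /\
  (forall a b c, circ a (dia b c) = dia (circ a b) (lam a c)).

Definition left_cancellative_semigroup (A : Type) (op : A -> A -> A) : Prop :=
  associative op /\ (forall a b c, op a b = op a c -> b = c).

Definition is_group_with (A : Type) (op : A -> A -> A) (u : A) (inv : A -> A)
    : Prop :=
  associative op /\ left_id u op /\ right_id u op /\
  (forall a, op a (inv a) = u) /\ (forall a, op (inv a) a = u).

Definition is_group (A : Type) (op : A -> A -> A) : Prop :=
  exists u inv, @is_group_with A op u inv.

Definition is_left_semi_brace (A : Type) (dia bul : A -> A -> A) : Prop :=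
  left_cancellative_semigroup dia /\
  exists u inv, @is_group_with A bul u inv /\
    (forall a b c, bul a (dia b c) = dia (bul a b) (bul a (dia (inv a) c))).

From mathcomp Require Import all_boot.

Set Implicit Arguments.
Unset Strict Implicit.

(** Since [a • b = a ∘ e⁻¹ ∘ b], the operation [•] is the group [(A, ∘)]
    transported along the bijection [σ], with identity [e] and inverse
    [a^• = e ∘ a⁻¹ ∘ e].  The semi-brace identity then follows from the
    truss identity applied at [a ∘ e⁻¹], because [a ∘ e⁻¹ ∘ a^• = e] and the
    idempotent [e] is a left identity of the left cancellative [(A, ⋄)]. *)

Section RightTranslation.

Variables (A : Type) (circ : A -> A -> A) (u : A) (inv : A -> A).
Hypothesis circ_group : is_group_with circ u inv.
Variable e : A.

Lemma mulrK_inv (a : A) : circ (circ a e) (inv e) = a.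
Proof. by case: circ_group => mulA [_ [mulx1 [mulxV _]]]; rewrite -mulA mulxV mulx1. Qed.

Lemma mulrKV_inv (a : A) : circ (circ a (inv e)) e = a.
Proof. by case: circ_group => mulA [_ [mulx1 [_ mulVx]]]; rewrite -mulA mulVx mulx1. Qed.

Lemma bijective_mulr : bijective (circ^~ e).
Proof. by exists (circ^~ (inv e)); [exact: mulrK_inv | exact: mulrKV_inv]. Qed.

Lemma cancel_mulr_invE (sigma_inv : A -> A) :
  cancel (circ^~ e) sigma_inv -> sigma_inv =1 circ^~ (inv e).
Proof. by move=> sK a; rewrite -{1}(mulrKV_inv a) sK. Qed.

Variable bul : A -> A -> A.
Hypothesis bulE : forall a b, bul a b = circ (circ a (inv e)) b.

Lemma isotope_group : is_group_with bul e (fun a => circ (circ e (inv a)) e).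
Proof.
case: circ_group => mulA [mul1x [mulx1 [mulxV mulVx]]].
split; [|split; [|split; [|split]]] => [a b c|a|a|a|a]; rewrite !bulE.
- by rewrite -!mulA.
- by rewrite mulxV mul1x.
- by rewrite mulrKV_inv.
- by rewrite -!mulA (mulA (inv e)) mulVx mul1x mulA mulxV mul1x.
- by rewrite -!mulA (mulA e (inv e)) mulxV mul1x mulVx mulx1.
Qed.

End RightTranslation.

Lemma idempotent_left_id (A : Type) (dia : A -> A -> A) (e : A) :
  left_cancellative_semigroup dia -> dia e e = e -> left_id e dia.
Proof. by move=> [diaA canc] ee z; apply: (canc e); rewrite diaA ee. Qed.

Lemma truss_semi_brace_identity (A : Type) (dia circ lam bul : A -> A -> A)
    (t binv : A -> A) (e : A) :
  (forall a b c, circ a (dia b c) = dia (circ a b) (lam a c)) ->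
  left_id e dia ->
  (forall a b, bul a b = circ (t a) b) ->
  (forall a, bul a (binv a) = e) ->
  forall a b c, bul a (dia b c) = dia (bul a b) (bul a (dia (binv a) c)).
Proof.
move=> truss e_dia bulE bulV a b c.
by rewrite !bulE !truss -(bulE a (binv a)) bulV e_dia.
Qed.

Theorem proposition2p5 (A : Type) (dia circ lam : A -> A -> A) (e : A) :
  is_left_semi_truss dia circ lam ->
  is_group circ ->
  left_cancellative_semigroup dia ->
  dia e e = e ->
  let sigma := fun a => circ a e in
  bijective sigma /\
  (forall sigma_inv : A -> A,
     cancel sigma sigma_inv -> cancel sigma_inv sigma ->
     is_left_semi_brace dia
       (fun a b => sigma (circ (sigma_inv a) (sigma_inv b)))).
Proof.
move=> [_ [circA truss]] [u [inv circ_group]] dia_lcs ee sigma.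
split; first exact: bijective_mulr circ_group e.
move=> sigma_inv sK _.
set bul := fun a b => _.
have bulE a b : bul a b = circ (circ a (inv e)) b.
  by rewrite /bul /sigma !(cancel_mulr_invE circ_group sK) -circA (mulrKV_inv circ_group).
have bul_group := isotope_group circ_group bulE.
split=> //; exists e, (fun a => circ (circ e (inv a)) e); split=> //.
case: bul_group => _ [_ [_ [bulV _]]].
exact: truss_semi_brace_identity truss (idempotent_left_id dia_lcs ee) bulE bulV.
Qed.
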